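(* Let $m$ be a positive even integer, and for $z\in\{0,1\}$ let $\mathcal G_z$ be the uniform distribution over $\textsc{GapOr}_m^{-1}(z)$. For every conjunction $C\colon\{0,1\}^m\to\{0,1\}$: (i) $C(\mathcal G_0)\in\{0,1\}$; (ii) if $C(\mathcal G_0)=1$ and $C$ has width $w\le m/4$, then $C(\mathcal G_1)\ge 3^{-w}$.
   Context: $\textsc{GapOr}_m\colon\{0,1\}^m\to\{0,1\}$ is the partial function with value $0$ on the all-zeros input and value $1$ on inputs of Hamming weight $m/2$ (undefined otherwise). A conjunction is an AND of literals; its width is its number of literals. For a conjunction $C$ and distribution $\mathcal D$, $C(\mathcal D)=\Pr_{x\sim\mathcal D}[C(x)=1]$. *)

From mathcomp Require Import all_boot all_order all_algebra.
Set Implicit Arguments. Unset Strict Implicit. Unset Printing Implicit Defensive.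
Import Order.TTheory GRing.Theory Num.Theory.

(* Inputs in {0,1}^m are finite functions 'I_m -> bool (true = 1). *)
Notation input m := {ffun 'I_m -> bool}.

Definition hweight m (x : input m) : nat := #|[set i | x i]|.

Definition gapor_inv m (z : bool) : {set input m} :=
  if z then [set x | hweight x == m %/ 2] else [set x | hweight x == 0].

(* A literal (i, b) is satisfied by x iff x i = b; i.e. (i,true) = x_i, (i,false) = ~x_i. *)
Definition literal m := ('I_m * bool)%type.

Definition conj_eval m (C : seq (literal m)) (x : input m) : bool :=
  all (fun l => x l.1 == l.2) C.

Definition width m (C : seq (literal m)) : nat := size C.

Definition prob_unif m (A : {set input m}) (C : seq (literal m)) : rat :=
  (#|[set x in A | conj_eval C x]|%:R / #|A|%:R)%R.

Definition CG m (C : seq (literal m)) (z : bool) : rat := prob_unif (gapor_inv m z) C.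

From mathcomp Require Import all_boot all_order all_algebra.
From mathcomp Require Import zify.
Set Implicit Arguments. Unset Strict Implicit.
Import Order.TTheory GRing.Theory Num.Theory.

(* The only input of weight 0 is the all-zeros input, so C(G_0) is C(0) in
   {0,1}.  If C(0) = 1, every literal of C is negative, and C accepts exactly
   the inputs whose support avoids the set S of variables of C.  Hence
   C(G_1) = 'C(m - |S|, m/2) / 'C(m, m/2), and each variable removed from the
   ground set costs at most a factor 3, because 'C(n+1, h) <= 3 'C(n, h) as
   long as h <= 2(n+1)/3, which holds for h = m/2 while |S| <= m/4. *)

Lemma leq_bin_S_3 n h : (3 * h <= 2 * n.+1)%N -> ('C(n.+1, h) <= 3 * 'C(n, h))%N.
Proof.
move=> h_small; have pos : (0 < n.+1 - h)%N by lia.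
rewrite -(leq_pmul2l pos) -mul_bin_down mulnA leq_mul2r.
by apply/orP; right; lia.
Qed.

Lemma leq_bin_addn_exp3 n k h :
  (3 * h <= 2 * n)%N -> ('C(n + k, h) <= 3 ^ k * 'C(n, h))%N.
Proof.
move=> h_small; elim: k => [|k IHk]; first by rewrite addn0 mul1n.
rewrite addnS expnS -mulnA; apply: leq_trans (leq_bin_S_3 _) _; first by lia.
by rewrite leq_mul2l IHk orbT.
Qed.

Lemma leq_bin_half_exp3 m k : ~~ odd m -> (k <= m %/ 4)%N ->
  ('C(m, m %/ 2) <= 3 ^ k * 'C(m - k, m %/ 2))%N.
Proof.
move=> m_even k_small; rewrite -{1}(subnK (_ : k <= m)%N); last first.
  by apply: leq_trans k_small (leq_div _ _).
apply: leq_bin_addn_exp3.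
have := divn_eq m 4; have := divn_eq m 2; have := modn2 m; rewrite (negbTE m_even).
by have := ltn_pmod m (isT : 0 < 4)%N; lia.
Qed.

Lemma card_set1_sep (T : finType) (a : T) (P : pred T) :
  #|[set x in [set a] | P x]| = P a.
Proof.
rewrite (_ : [set x in [set a] | P x] = if P a then [set a] else set0).
  by case: (P a); rewrite ?cards1 ?cards0.
by apply/setP => x; case: ifP => Pa; rewrite !inE; case: eqP => // ->.
Qed.

Section Inputs.

Variable m : nat.

Definition supp (x : input m) : {set 'I_m} := [set i | x i].

Definition zero_input : input m := [ffun => false].

Definition vars (C : seq (literal m)) : {set 'I_m} := [set l.1 | l in C].

Lemma supp_inj : injective supp.
Proof.
move=> x y /setP eq_supp; apply/ffunP => i.
by have := eq_supp i; rewrite !inE.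
Qed.

Lemma card_supp_sub_weight (B : {set 'I_m}) h :
  #|[set x : input m | supp x \subset B & hweight x == h]| = 'C(#|B|, h).
Proof.
rewrite -cards_draws -(card_imset _ supp_inj); apply: eq_card => A.
rewrite inE; apply/imsetP/idP => [[x] | A_draw].
  by rewrite inE => x_draw ->.
have supp_A : supp [ffun i => i \in A] = A.
  by apply/setP => i; rewrite inE ffunE.
by exists [ffun i => i \in A]; rewrite // inE -[hweight _]/#|supp _| supp_A.
Qed.

Lemma gapor_inv0 : gapor_inv m false = [set zero_input].
Proof.
apply/setP => x; rewrite !inE /hweight cards_eq0; apply/eqP/eqP => [x_0|->].
  by apply/ffunP => i; have /setP/(_ i) := x_0; rewrite !inE ffunE.
by apply/setP => i; rewrite !inE ffunE.
Qed.

Lemma gapor_inv1 : gapor_inv m true =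
  [set x : input m | supp x \subset [set: 'I_m] & hweight x == m %/ 2].
Proof. by apply/setP => x; rewrite !inE subsetT. Qed.

Lemma conj_eval_zero C : conj_eval C zero_input = all (fun l => ~~ l.2) C.
Proof. by apply: eq_all => l; rewrite ffunE eq_sym eqbF_neg. Qed.

Lemma conj_eval_neg C x : all (fun l => ~~ l.2) C ->
  conj_eval C x = (supp x \subset ~: vars C).
Proof.
move=> /allP C_neg; apply/allP/subsetP => [x_sat i | x_avoids l l_C].
  rewrite !inE => x_i; apply/imsetP => -[l l_C i_l].
  by have := x_sat l l_C; rewrite -i_l x_i (negbTE (C_neg l l_C)).
rewrite (negbTE (C_neg l l_C)) eqbF_neg; apply/negP => x_l.
by have := x_avoids l.1; rewrite !inE x_l imset_f // => /(_ isT).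
Qed.

Lemma card_vars C : (#|vars C| <= width C)%N.
Proof. exact: leq_trans (leq_imset_card _ _) (card_size _). Qed.

Local Open Scope ring_scope.

Lemma CG0E C : CG C false = (conj_eval C zero_input)%:R.
Proof. by rewrite /CG /prob_unif gapor_inv0 cards1 divr1 card_set1_sep. Qed.

Lemma CG1E_neg C : all (fun l => ~~ l.2) C ->
  CG C true = 'C(m - #|vars C|, m %/ 2)%:R / 'C(m, m %/ 2)%:R.
Proof.
move=> C_neg; rewrite /CG /prob_unif.
rewrite (_ : [set x in _ | _] =
  [set x : input m | supp x \subset ~: vars C & hweight x == (m %/ 2)%N]); last first.
  by apply/setP => x; rewrite !inE andbC conj_eval_neg.
by rewrite gapor_inv1 !card_supp_sub_weight cardsT cardsCs setCK card_ord.
Qed.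

End Inputs.

Local Open Scope ring_scope.

Theorem fact3p3 (m : nat) (hm : (0 < m)%N) (heven : ~~ odd m)
    (C : seq (literal m)) :
  (CG C false = 0 \/ CG C false = 1) /\
  (CG C false = 1 -> (width C <= m %/ 4)%N ->
     (3 ^+ width C)^-1 <= CG C true).
Proof.
rewrite CG0E conj_eval_zero; split; first by case: (all _ C); [right | left].
case C_neg: (all _ C); last by move/eqP; rewrite eq_sym oner_eq0.
move=> _ w_small.
have k_small := leq_trans (card_vars C) w_small.
have bin_pos : (0 < 'C(m, m %/ 2))%N by rewrite bin_gt0 leq_div.
rewrite CG1E_neg //; apply: (@le_trans _ _ (3 ^+ #|vars C|)^-1).
  by rewrite lef_pV2 ?posrE ?exprn_gt0 // ler_eXn2l // card_vars.
rewrite ler_pdivlMr ?ltr0n // ler_pdivrMl ?exprn_gt0 //.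
by rewrite -natrX -natrM ler_nat leq_bin_half_exp3.
Qed.
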